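(* Let $\mathcal{B},\mathcal{B}'$ be differential bigraded algebras over $\mathcal{I}$, let $\widehat{A},\widehat{A}'$ be differential bigraded right $\mathcal{B}$-modules that are free over $\mathbb{Z}$ with bases of bigrading-homogeneous elements having unique right idempotents, and let $\widehat{DD}$ be a rank-one Type DD bimodule over $\mathcal{B}$ and $\mathcal{B}'$. Suppose there are $\mathcal{A}_\infty$-morphisms $F:\widehat{A}\to\widehat{A}'$ and $G:\widehat{A}'\to\widehat{A}$ with $F_n=G_n=0$ for $n>2$ and with $F_2=0$ or $G_2=0$, an $\mathcal{A}_\infty$ homotopy $H$ between $G\circ F$ and $\mathrm{id}_{\widehat{A}}$ with $H_n=0$ for $n>1$, and an $\mathcal{A}_\infty$ homotopy $H'$ between $F\circ G$ and $\mathrm{id}_{\widehat{A}'}$ with $H'_n=0$ for $n>1$. Then the Type D structures $\widehat{A}\boxtimes\widehat{DD}$ and $\widehat{A}'\boxtimes\widehat{DD}$ over $\mathcal{B}'$ are homotopy equivalent.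
   Context: $\mathcal{I}=\mathbb{Z}e_1\times\cdots\times\mathbb{Z}e_k$; differential bigraded algebras over $\mathcal{I}$: bigraded (intrinsic, homological $=\deg_h$), degree-$(0,0)$ part $\mathcal{I}$, differential $\mu_1$ of bidegree $(0,1)$, $\mu_1^2=0$, $\mu_1(xy)=(-1)^{\deg_hy}\mu_1(x)y+x\mu_1(y)$, multiplication $\mu_2$. Right dg module: differential $m_1$ of bidegree $(0,1)$, $m_1^2=0$, $m_1(xb)=(-1)^{\deg_hb}m_1(x)b+x\mu_1(b)$; action $m_2$. $|\mathrm{id}|$ multiplies by $(-1)^{\deg_h}$. Rank-one Type DD bimodule: $\widehat{DD}=\mathcal{I}$ with $\delta_{DD}(1)=\sum_sa_s\otimes c_s^{op}\in\mathcal{B}\otimes_{\mathcal{I}}(\mathcal{B}')^{op}$ of bidegree $(0,1)$ satisfying $\sum_s(-1)^{\deg_hc_s}\mu_1(a_s)\otimes c_s^{op}+\sum_sa_s\otimes\mu_1(c_s)^{op}+\sum_{s,t}(-1)^{\deg_h(a_t)\deg_h(c_s)}a_sa_t\otimes c_t^{op}c_s^{op}=0$. $\widehat{A}\boxtimes\widehat{DD}$ is the Type D structure over $\mathcal{B}'$ on $\widehat{A}$ with $\delta(x)=1\otimes m_1(x)+\sum_s(-1)^{\deg_h(xa_s)\deg_h(c_s)}c_s\otimes xa_s$. An $\mathcal{A}_\infty$-morphism with vanishing components above $2$: bigrading-preserving $\mathcal{I}$-linear $F_1$ and $F_2:\widehat{A}\otimes_{\mathcal{I}}\mathcal{B}\to\widehat{A}'$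 lowering $\deg_h$ by one with $m_1'F_1=F_1m_1$, $m_1'F_2+m_2'(F_1\otimes\mathrm{id})=F_1m_2-F_2(m_1\otimes|\mathrm{id}|)-F_2(\mathrm{id}\otimes\mu_1)$, $-m_2'(F_2\otimes|\mathrm{id}|)=F_2(m_2\otimes\mathrm{id})-F_2(\mathrm{id}\otimes\mu_2)$; the identity has components $(\mathrm{id},0)$. Composition: $(G\circ F)_n=\sum_{i+j=n+1}(-1)^{(i+1)(j+1)}G_i\circ(F_j\otimes|\mathrm{id}|^{(j+1)\otimes(i-1)})$, where $|\mathrm{id}|^{j\otimes k}$ is the $k$-fold tensor power of multiplication by $(-1)^{j\deg_h}$. An $\mathcal{A}_\infty$ homotopy $H$ with $H_n=0$ for $n>1$ between $F$ and $G$: $\mathcal{I}$-linear $H_1$ preserving intrinsic degree, lowering $\deg_h$ by one, with $F_1-G_1=m_1'H_1+H_1m_1$, $F_2-G_2=-m_2'(H_1\otimes|\mathrm{id}|)+H_1m_2$, and $F_n=G_n$ for $n>2$. For Type D structures $(D,\delta),(D',\delta')$ over $\mathcal{B}'$: a morphism is a bigrading-preserving $\mathcal{I}$-linear $\Phi:D\to\mathcal{B}'\otimes_{\mathcal{I}}D'$ with $(\mu_1\otimes|\mathrm{id}|)\Phi=(\mu_2\otimes\mathrm{id})(\mathrm{id}\otimes\Phi)\delta-(\mu_2\otimes\mathrm{id})(\mathrm{id}\otimes\delta')\Phi$; composition $\Psi\circ\Phi=(\mu_2\otimes\mathrm{id})(\mathrm{id}\otimes\Psi)\Phi$; identity $x\mapsto1\otimes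 x$; a homotopy between $\Phi,\Psi$ is an $\mathcal{I}$-linear $K:D\to\mathcal{B}'\otimes_{\mathcal{I}}D'$ lowering $\deg_h$ by one with $\Phi-\Psi=(\mu_2\otimes\mathrm{id})(\mathrm{id}\otimes K)\delta+(\mu_2\otimes\mathrm{id})(\mathrm{id}\otimes\delta')K+(\mu_1\otimes|\mathrm{id}|)K$; $D,D'$ are homotopy equivalent if there are morphisms $\Phi:D\to D'$, $\Psi:D'\to D$ with $\Psi\circ\Phi$ homotopic to $\mathrm{id}_D$ and $\Phi\circ\Psi$ homotopic to $\mathrm{id}_{D'}$. *)

From Stdlib Require Import ClassicalEpsilon.
From HB Require Import structures.
From mathcomp Require Import all_boot all_order all_algebra.
Set Implicit Arguments. Unset Strict Implicit. Unset Printing Implicit Defensive.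
Import Order.TTheory GRing.Theory Num.Theory.
Local Open Scope ring_scope.

(* parity of an integer: (-1)^q = -1 iff oddz q *)
Definition oddz (q : int) : bool := odd `|q|%N.
Definition sgnz (V : zmodType) (b : bool) (v : V) : V := if b then - v else v.

(* bidegrees: (intrinsic, homological) in Γ × ℤ *)
Definition dadd (Γ : zmodType) (d d' : Γ * int) : Γ * int := (d.1 + d'.1, d.2 + d'.2).
Definition dsub (Γ : zmodType) (d d' : Γ * int) : Γ * int := (d.1 - d'.1, d.2 - d'.2).

Section FSum.
Variables (J : eqType) (V : zmodType).
Definition fin_supp (f : J -> V) := exists s : seq J, forall j, j \notin s -> f j = 0.
Definition fsum (f : J -> V) : V :=
  match excluded_middle_informative (fin_supp f) with
  | left H => \sum_(j <- undup (proj1_sig (constructive_indefinite_description _ H))) f j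
  | right _ => 0
  end.
End FSum.

(* Bigradings, given by the family of projections pr d onto the        *)
(* homogeneous summands V_d  (V = ⊕_d V_d)                             *)
Section Graded.
Variables (Γ V : zmodType) (pr : Γ * int -> V -> V).

Definition hom (d : Γ * int) (v : V) := pr d v = v.

Definition is_grading :=
  (forall d x y, pr d (x - y) = pr d x - pr d y) /\
  (forall d d' x, pr d (pr d' x) = if d == d' then pr d x else 0) /\
  (forall x, exists s : seq (Γ * int), uniq s /\ x = \sum_(d <- s) pr d x).

(* |id| : multiplication by (-1)^{deg_h}, extended additively *)
Definition sgnh (x : V) : V := fsum (fun d : Γ * int => sgnz (oddz d.2) (pr d x)).
(* |id|^j : multiplication by (-1)^{j deg_h} *)
Definition sgnh_pow (j : nat) (x : V) : V := if odd j then sgnh x else x.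
End Graded.

(* Differential bigraded algebras over I = ℤe_1 × ... × ℤe_k          *)
Section DBGA.
Variables (k : nat) (Γ : zmodType) (B : pzRingType) (e : 'I_k -> B)
  (pr : Γ * int -> B -> B) (mu1 : B -> B).
Definition is_dbga :=
  is_grading pr /\
  (forall d d' x y, hom pr d x -> hom pr d' y -> hom pr (dadd d d') (x * y)) /\
  (* the degree-(0,0) part is I = ℤe_1 × ... × ℤe_k *)
  (forall i j, e i * e j = (if i == j then e i else 0)) /\
  (\sum_i e i = 1) /\
  (forall i, hom pr (0, 0) (e i)) /\
  (forall x, hom pr (0, 0) x -> exists n : 'I_k -> int, x = \sum_i e i *~ n i) /\
  (forall n : 'I_k -> int, \sum_i e i *~ n i = 0 -> forall i, n i = 0) /\
  (forall x y, mu1 (x - y) = mu1 x - mu1 y) /\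
  (forall g q x, hom pr (g, q) x -> hom pr (g, q + 1) (mu1 x)) /\
  (forall x, mu1 (mu1 x) = 0) /\
  (forall x y, mu1 (x * y) = mu1 x * sgnh pr y + x * mu1 y) /\
  (* "over I": mu1 is I-linear, i.e. kills the idempotents *)
  (forall i, mu1 (e i) = 0).
End DBGA.

Record dbga (k : nat) (Γ : zmodType) := DBGA {
  dbga_car :> pzRingType;
  idem : 'I_k -> dbga_car;
  dpr : Γ * int -> dbga_car -> dbga_car;
  mu1 : dbga_car -> dbga_car;
  dbga_ax : is_dbga idem dpr mu1 }.
Arguments idem {k Γ} B i : rename.
Arguments dpr {k Γ} B d x : rename.
Arguments mu1 {k Γ} B x : rename.

(* Differential bigraded right B-modules, free over ℤ with a chosen    *)
(* basis (bas j)_{j ∈ J} of bigrading-homogeneous elements having      *)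
(* unique right idempotents e_(bidem j);  coord x j is the j-th         *)
Section DGMod.
Variables (k : nat) (Γ : zmodType) (B : dbga k Γ).
Variables (M : zmodType) (act : M -> B -> M) (pr : Γ * int -> M -> M) (m1 : M -> M).
Variables (J : eqType) (bas : J -> M) (coord : M -> J -> int) (bidem : J -> 'I_k).

Definition is_dgmod :=
  (forall x y a, act (x - y) a = act x a - act y a) /\
  (forall x a b, act x (a - b) = act x a - act x b) /\
  (forall x, act x 1 = x) /\
  (forall x a b, act (act x a) b = act x (a * b)) /\
  is_grading pr /\
  (forall d d' x a, hom pr d x -> hom (dpr B) d' a -> hom pr (dadd d d') (act x a)) /\
  (forall x y, m1 (x - y) = m1 x - m1 y) /\
  (forall g q x, hom pr (g, q) x -> hom pr (g, q + 1) (m1 x)) /\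
  (forall x, m1 (m1 x) = 0) /\
  (forall x a, m1 (act x a) = act (m1 x) (sgnh (dpr B) a) + act x (mu1 B a)).

Definition is_hom_basis :=
  (forall x y j, coord (x - y) j = coord x j - coord y j) /\
  (forall j j', coord (bas j) j' = (if j == j' then 1 else 0)) /\
  (forall x, exists s : seq J, uniq s /\ (forall j, j \notin s -> coord x j = 0) /\
       x = \sum_(j <- s) bas j *~ coord x j) /\
  (forall j, exists d, hom pr d (bas j)) /\
  (forall j, act (bas j) (idem B (bidem j)) = bas j) /\
  (forall j i, act (bas j) (idem B i) = bas j -> i = bidem j).
End DGMod.

Record dgmod (k : nat) (Γ : zmodType) (B : dbga k Γ) := DGMod {
  mod_car :> zmodType;
  mact : mod_car -> B -> mod_car;
  mpr : Γ * int -> mod_car -> mod_car;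
  m1 : mod_car -> mod_car;
  mJ : eqType;
  mbas : mJ -> mod_car;
  mcoord : mod_car -> mJ -> int;
  mbidem : mJ -> 'I_k;
  mod_ax : is_dgmod mact mpr m1;
  mod_basis : is_hom_basis mact mpr mbas mcoord mbidem }.
Arguments mact {k Γ B} A x a : rename.
Arguments mpr {k Γ B} A d x : rename.
Arguments m1 {k Γ B} A x : rename.
Arguments mJ {k Γ B} A : rename.
Arguments mbas {k Γ B} A j : rename.
Arguments mcoord {k Γ B} A x j : rename.
Arguments mbidem {k Γ B} A j : rename.

(* Maps out of  A ⊗_I B  are encoded as I-balanced biadditive maps.    *)
Section Ainf.
Variables (k : nat) (Γ : zmodType) (B : dbga k Γ).

Definition is_ainf2 (A A' : dgmod B) (F1 : A -> A') (F2 : A -> B -> A') :=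
  (forall x y, F1 (x - y) = F1 x - F1 y) /\
  (forall x i, F1 (mact A x (idem B i)) = mact A' (F1 x) (idem B i)) /\
  (forall d x, hom (mpr A) d x -> hom (mpr A') d (F1 x)) /\
  (forall x y a, F2 (x - y) a = F2 x a - F2 y a) /\
  (forall x a b, F2 x (a - b) = F2 x a - F2 x b) /\
  (forall x i a, F2 (mact A x (idem B i)) a = F2 x (idem B i * a)) /\
  (forall x a i, F2 x (a * idem B i) = mact A' (F2 x a) (idem B i)) /\
  (forall g q g' q' x a, hom (mpr A) (g, q) x -> hom (dpr B) (g', q') a ->
      hom (mpr A') (g + g', q + q' - 1) (F2 x a)) /\
  (forall x, m1 A' (F1 x) = F1 (m1 A x)) /\
  (forall x a, m1 A' (F2 x a) + mact A' (F1 x) a =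
      F1 (mact A x a) - F2 (m1 A x) (sgnh (dpr B) a) - F2 x (mu1 B a)) /\
  (forall x a b, - mact A' (F2 x a) (sgnh (dpr B) b) =
      F2 (mact A x a) b - F2 x (a * b)).

(* the full family of components (F_n)_{n >= 1} of a morphism with
   F_1 = F1, F_2 = F2, F_n = 0 for n > 2;  F n x bs  is
   F_n(x ⊗ b_1 ⊗ ... ⊗ b_{n-1}) for bs = [:: b_1; ...; b_{n-1}] *)
Definition aseq (M M' : zmodType) (F1 : M -> M') (F2 : M -> B -> M')
    (n : nat) (x : M) (bs : seq B) : M' :=
  match n with 1%N => F1 x | 2%N => F2 x (head 0 bs) | _ => 0 end.

Definition aid (M : zmodType) : nat -> M -> seq B -> M :=
  aseq (fun x : M => x) (fun _ _ => 0).

(* (G ∘ F)_n = Σ_{i+j=n+1} (-1)^{(i+1)(j+1)} G_i ∘ (F_j ⊗ |id|^{(j+1)⊗(i-1)}) *)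
Definition acomp (M M' M'' : zmodType) (F : nat -> M -> seq B -> M')
    (G : nat -> M' -> seq B -> M'') (n : nat) (x : M) (bs : seq B) : M'' :=
  \sum_(1 <= j < n.+1)
     sgnz (odd ((n.+1 - j).+1 * j.+1))
       (G (n.+1 - j)%N (F j x (take j.-1 bs)) (map (sgnh_pow (dpr B) j.+1) (drop j.-1 bs))).

(* A_infinity homotopy H (with H_1 = H1, H_n = 0 for n > 1) between F and G *)
Definition is_ainf_htpy (A A' : dgmod B) (F G : nat -> A -> seq B -> A') (H1 : A -> A') :=
  (forall x y, H1 (x - y) = H1 x - H1 y) /\
  (forall x i, H1 (mact A x (idem B i)) = mact A' (H1 x) (idem B i)) /\
  (forall g q x, hom (mpr A) (g, q) x -> hom (mpr A') (g, q - 1) (H1 x)) /\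
  (forall x, F 1%N x [::] - G 1%N x [::] = m1 A' (H1 x) + H1 (m1 A x)) /\
  (forall x a, F 2%N x [:: a] - G 2%N x [:: a] =
      - mact A' (H1 x) (sgnh (dpr B) a) + H1 (mact A x a)) /\
  (forall n x bs, (2 < n)%N -> size bs = n.-1 -> F n x bs = G n x bs).
End Ainf.

(* Rank-one Type DD bimodules over B and C (= B' in the paper).        *)
(* delta_DD(1) = Σ_s a_s ⊗ c_s^op is given as a list of terms, each    *)
(* with homogeneous a_s, c_s of the recorded bidegrees.                 *)
Record ddterm (TB TC D : Type) := DDT { dda : TB; ddda : D; ddc : TC; dddc : D }.

Section DD.
Variables (k : nat) (Γ : zmodType) (B C : dbga k Γ).

(* Σ_p p.1 ⊗ p.2^op = 0 in B ⊗_I C^op  (tested against every I-balanced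
   biadditive map, i.e. via the universal property of ⊗_I) *)
Definition tensor_zero (f : seq (B * C)) :=
  forall (Z : zmodType) (beta : B -> C -> Z),
    (forall a a' c, beta (a - a') c = beta a c - beta a' c) ->
    (forall a c c', beta a (c - c') = beta a c - beta a c') ->
    (forall a i c, beta (a * idem B i) c = beta a (c * idem C i)) ->
    \sum_(p <- f) beta p.1 p.2 = 0.

Definition is_rank1_DD (ds : seq (ddterm B C (Γ * int))) :=
  (forall t, List.In t ds -> hom (dpr B) (ddda t) (dda t)) /\
  (forall t, List.In t ds -> hom (dpr C) (dddc t) (ddc t)) /\
  (* delta_DD(1) has bidegree (0,1) *)
  (forall t, List.In t ds -> dadd (ddda t) (dddc t) = (0, 1)) /\
  (* delta_DD is a map of I-bimodules:  e_i delta(1) = delta(1) e_i *)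
  (forall i, tensor_zero
     ([seq (idem B i * dda t, ddc t) | t <- ds] ++
      [seq (- dda t, idem C i * ddc t) | t <- ds])) /\
  tensor_zero
     ([seq (sgnz (oddz (dddc t).2) (mu1 B (dda t)), ddc t) | t <- ds] ++
      [seq (dda t, mu1 C (ddc t)) | t <- ds] ++
      [seq (sgnz (oddz (ddda t).2 && oddz (dddc s).2) (dda s * dda t), ddc s * ddc t)
         | s <- ds, t <- ds]).
End DD.

(* Type D structures over C on the modules A (free with basis):        *)
(* C ⊗_I A  is modeled as ⊕_{j ∈ mJ A} C e_{bidem j}, i.e. families    *)
(* f : mJ A -> C (finitely supported, f j = f j e_{bidem j}), where    *)
(* f stands for Σ_j f j ⊗ bas j.  The left I-action on A is x ↦ x e_i. *)
Section TypeD.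
Variables (k : nat) (Γ : zmodType) (B C : dbga k Γ).

Definition tens (A : dgmod B) (c : C) (y : A) : mJ A -> C :=
  fun j => (c * idem C (mbidem A j)) *~ mcoord A y j.

Definition tensor_elt (A : dgmod B) (f : mJ A -> C) :=
  fin_supp f /\ forall j, f j = f j * idem C (mbidem A j).

(* the Type D structure  A ⊠ DD :
   delta(x) = 1 ⊗ m1(x) + Σ_s (-1)^{deg_h(x a_s) deg_h(c_s)} c_s ⊗ x a_s *)
Definition box_delta (A : dgmod B) (ds : seq (ddterm B C (Γ * int))) (x : A) : mJ A -> C :=
  fun j => tens 1 (m1 A x) j +
    \sum_(t <- ds)
       tens (ddc t) (if oddz (dddc t).2 then sgnh (mpr A) (mact A x (dda t))
                     else mact A x (dda t)) j.

(* (μ2 ⊗ id) ∘ (id ⊗ Ψ) ∘ Φ *)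
Definition dcomp (A1 A2 A3 : dgmod B) (Phi : A1 -> mJ A2 -> C) (Psi : A2 -> mJ A3 -> C)
    : A1 -> mJ A3 -> C :=
  fun x j => fsum (fun j' => Phi x j' * Psi (mbas A2 j') j).

Definition did (A : dgmod B) : A -> mJ A -> C := fun x => tens 1 x.

(* (μ1 ⊗ |id|) ∘ Φ *)
Definition dmu1 (A1 A2 : dgmod B) (Phi : A1 -> mJ A2 -> C) : A1 -> mJ A2 -> C :=
  fun x j => fsum (fun j' => tens (mu1 C (Phi x j')) (sgnh (mpr A2) (mbas A2 j')) j).

(* an I-linear map D1 -> C ⊗_I D2 changing the bidegree by (0, s) *)
Definition dmap_of_deg (A1 A2 : dgmod B) (s : int) (Phi : A1 -> mJ A2 -> C) :=
  (forall x y j, Phi (x - y) j = Phi x j - Phi y j) /\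
  (forall x, tensor_elt (Phi x)) /\
  (forall x i j, Phi (mact A1 x (idem B i)) j = idem C i * Phi x j) /\
  (forall d x j d', hom (mpr A1) d x -> hom (mpr A2) d' (mbas A2 j) ->
      hom (dpr C) (dsub (dadd d (0, s)) d') (Phi x j)).

Definition is_dmorph (A1 A2 : dgmod B) (delta1 : A1 -> mJ A1 -> C) (delta2 : A2 -> mJ A2 -> C)
    (Phi : A1 -> mJ A2 -> C) :=
  dmap_of_deg 0 Phi /\
  forall x j, dmu1 Phi x j = dcomp delta1 Phi x j - dcomp Phi delta2 x j.

Definition is_dhtpy (A1 A2 : dgmod B) (delta1 : A1 -> mJ A1 -> C) (delta2 : A2 -> mJ A2 -> C)
    (Phi Psi K : A1 -> mJ A2 -> C) :=
  dmap_of_deg (-1) K /\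
  forall x j, Phi x j - Psi x j =
     dcomp delta1 K x j + dcomp K delta2 x j + dmu1 K x j.

Definition dhtpy_equiv (A1 A2 : dgmod B) (delta1 : A1 -> mJ A1 -> C) (delta2 : A2 -> mJ A2 -> C) :=
  exists (Phi : A1 -> mJ A2 -> C) (Psi : A2 -> mJ A1 -> C)
         (K : A1 -> mJ A1 -> C) (K' : A2 -> mJ A2 -> C),
    is_dmorph delta1 delta2 Phi /\ is_dmorph delta2 delta1 Psi /\
    is_dhtpy delta1 delta1 (dcomp Phi Psi) (fun x : A1 => did x) K /\
    is_dhtpy delta2 delta2 (dcomp Psi Phi) (fun x : A2 => did x) K'.
End TypeD.

(* For an A-infinity morphism F with F_n = 0 for n > 2, the map
   x |-> 1 (x) F1(x) + sum_s (+-) c_s (x) F2(x, a_s) is a morphism of Type D structures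
   A [x] DD -> A' [x] DD: after cancelling with the A-infinity relations of F, the defect
   is the structure equation of DD tested against the I-balanced map (a, c) |-> c (x) F2(x, +-a),
   hence zero.  When F2 = 0 or G2 = 0 the composite of the boxes of F and G has no term
   c_s c_t (x) G2(F2(x, a_s), a_t), so it is the box of G o F, and x |-> 1 (x) H1(x) is a
   homotopy from it to the identity by the homotopy relations of H.  All sign bookkeeping
   is done on bihomogeneous elements, where |id| is an explicit sign. *)

From Stdlib Require Import ClassicalEpsilon FunctionalExtensionality.
From HB Require Import structures.
From mathcomp Require Import all_boot all_order all_algebra zify.
Set Implicit Arguments. Unset Strict Implicit. Unset Printing Implicit Defensive.
Import Order.TTheory GRing.Theory Num.Theory.
Local Open Scope ring_scope.

Definition additive_of (U V : zmodType) (f : U -> V) (fB : zmod_morphism f) :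
  {additive U -> V} := HB.pack f (GRing.isZmodMorphism.Build U V f fB).

Section ZmodMorphism.
Variables (U V : zmodType) (f : U -> V) (fB : zmod_morphism f).

Lemma zmod_morph0 : f 0 = 0. Proof. exact: (raddf0 (additive_of fB)). Qed.
Lemma zmod_morphN x : f (- x) = - f x. Proof. exact: (raddfN (additive_of fB)). Qed.
Lemma zmod_morphD x y : f (x + y) = f x + f y. Proof. exact: (raddfD (additive_of fB)). Qed.
Lemma zmod_morphMz x n : f (x *~ n) = f x *~ n. Proof. exact: (raddfMz (additive_of fB)). Qed.
Lemma zmod_morph_sum (I : Type) (r : seq I) (P : pred I) (F : I -> U) :
  f (\sum_(i <- r | P i) F i) = \sum_(i <- r | P i) f (F i).
Proof. exact: (raddf_sum (additive_of fB)). Qed.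

Lemma zmod_morph_sub (g : U -> V) : zmod_morphism g -> zmod_morphism (fun x => f x - g x).
Proof. by move=> gB x y; rewrite fB gB !opprB addrACA [RHS]addrACA [- g x + _]addrC. Qed.
End ZmodMorphism.

Lemma big_In_eq (V : zmodType) (T : Type) (ts : seq T) (F G : T -> V) :
  (forall t, List.In t ts -> F t = G t) -> \sum_(t <- ts) F t = \sum_(t <- ts) G t.
Proof.
elim: ts => [|t ts IH] h; first by rewrite !big_nil.
by rewrite !big_cons h ?IH //; [move=> t' it; apply: h; right | left].
Qed.

Section FiniteSums.
Variables (J : eqType) (V : zmodType).
Implicit Types (f g : J -> V) (s : seq J).

Lemma big_uniq_supp s1 s2 f : uniq s1 -> uniq s2 ->
  (forall j, j \notin s1 -> f j = 0) -> (forall j, j \notin s2 -> f j = 0) ->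
  \sum_(j <- s1) f j = \sum_(j <- s2) f j.
Proof.
move=> u1 u2 h1 h2.
rewrite (bigID (mem s2)) /= [X in _ + X]big1 ?addr0; last by move=> j /h2.
rewrite [RHS](bigID (mem s1)) /= [X in _ + X]big1 ?addr0; last by move=> j /h1.
rewrite -[LHS]big_filter -[RHS]big_filter; apply/perm_big/uniq_perm; rewrite ?filter_uniq //.
by move=> j; rewrite !mem_filter andbC.
Qed.

Lemma fsumE f s : (forall j, j \notin s -> f j = 0) -> fsum f = \sum_(j <- undup s) f j.
Proof.
move=> hs; rewrite /fsum; case: excluded_middle_informative => [H|nH]; last first.
  by exfalso; apply: nH; exists s.
case: (constructive_indefinite_description _ H) => s0 h0 /=.
by apply: big_uniq_supp; rewrite ?undup_uniq // => j; rewrite mem_undup; [apply: h0 | apply: hs].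
Qed.

Lemma fsumB f g : fin_supp f -> fin_supp g -> fsum (fun j => f j - g j) = fsum f - fsum g.
Proof.
move=> [s1 h1] [s2 h2].
have f0 j : j \notin s1 ++ s2 -> f j = 0 by rewrite mem_cat negb_or => /andP[/h1].
have g0 j : j \notin s1 ++ s2 -> g j = 0 by rewrite mem_cat negb_or => /andP[_ /h2].
rewrite (fsumE f0) (fsumE g0) -sumrB; apply: fsumE => j j12.
by rewrite f0 // g0 // subr0.
Qed.
End FiniteSums.

(** * Signs and gradings *)

Lemma oddzD (a b : int) : oddz (a + b) = oddz a (+) oddz b.
Proof.
rewrite /oddz; case: (boolP (odd `|a|)) => ha; case: (boolP (odd `|b|)) => hb /=;
  [apply/negbTE | apply/idP | apply/idP | apply/negbTE]; lia.
Qed.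
Lemma oddzN (a : int) : oddz (- a) = oddz a. Proof. by rewrite /oddz abszN. Qed.
Lemma oddzB (a b : int) : oddz (a - b) = oddz a (+) oddz b. Proof. by rewrite oddzD oddzN. Qed.

Section Signs.
Variable V : zmodType.
Implicit Types (x y : V) (b : bool).

Lemma sgnzB b x y : sgnz b (x - y) = sgnz b x - sgnz b y.
Proof. by case: b => //=; rewrite opprB addrC opprK. Qed.
Lemma sgnz0 b : sgnz b (0 : V) = 0. Proof. by case: b => //=; rewrite oppr0. Qed.
Lemma sgnz_sgnz b b' x : sgnz b (sgnz b' x) = sgnz (b (+) b') x.
Proof. by case: b; case: b' => //=; rewrite opprK. Qed.
Lemma opp_sgnz b x : - sgnz b x = sgnz (~~ b) x.
Proof. by case: b => //=; rewrite opprK. Qed.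
Lemma zmod_morph_sgnz (W : zmodType) (f : V -> W) (fB : zmod_morphism f) b x :
  f (sgnz b x) = sgnz b (f x).
Proof. by case: b => //=; rewrite (zmod_morphN fB). Qed.
End Signs.

Section Grading.
Variables (Γ V : zmodType) (pr : Γ * int -> V -> V) (prV : is_grading pr).
Implicit Types (d : Γ * int) (x y : V).

Lemma pr_morph d : zmod_morphism (pr d). Proof. by case: prV => h _ x y; apply: h. Qed.
Lemma pr_pr d d' x : pr d (pr d' x) = if d == d' then pr d x else 0.
Proof. by case: prV => _ []. Qed.

Lemma hom0 d : hom pr d 0. Proof. exact: zmod_morph0 (pr_morph d). Qed.
Lemma homN d x : hom pr d x -> hom pr d (- x).
Proof. by rewrite /hom (zmod_morphN (pr_morph d)) => ->. Qed.
Lemma homD d x y : hom pr d x -> hom pr d y -> hom pr d (x + y).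
Proof. by rewrite /hom (zmod_morphD (pr_morph d)) => -> ->. Qed.
Lemma homMz d x n : hom pr d x -> hom pr d (x *~ n).
Proof. by rewrite /hom (zmod_morphMz (pr_morph d)) => ->. Qed.
Lemma hom_sgnz d b x : hom pr d x -> hom pr d (sgnz b x).
Proof. by case: b => //; apply: homN. Qed.
Lemma hom_sum d (I : Type) (r : seq I) (P : pred I) (F : I -> V) :
  (forall i, P i -> hom pr d (F i)) -> hom pr d (\sum_(i <- r | P i) F i).
Proof. by move=> h; elim/big_ind: _ => //; [apply: hom0 | apply: homD]. Qed.
Lemma hom_sum_In d (T : Type) (ts : seq T) (F : T -> V) :
  (forall t, List.In t ts -> hom pr d (F t)) -> hom pr d (\sum_(t <- ts) F t).
Proof.
elim: ts => [|t ts IH] h; first by rewrite big_nil; apply: hom0.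
by rewrite big_cons; apply: homD; [apply: h; left | apply: IH => t' it; apply: h; right].
Qed.
Lemma hom_pr d x : hom pr d (pr d x). Proof. by rewrite /hom pr_pr eqxx. Qed.
Lemma eq_hom d d' x : d = d' -> hom pr d x -> hom pr d' x. Proof. by move=> ->. Qed.

Lemma hom_decomp x : exists s : seq (Γ * int), x = \sum_(d <- s) pr d x.
Proof. by case: prV => _ [_ /(_ x) [s [_ ex]]]; exists s. Qed.

Lemma hom_ind (W : zmodType) (f : V -> W) : zmod_morphism f ->
  (forall d x, hom pr d x -> f x = 0) -> forall x, f x = 0.
Proof.
move=> fB h x; have [s ->] := hom_decomp x.
by rewrite (zmod_morph_sum fB) big1 // => d _; apply/h/hom_pr.
Qed.

Lemma sgnh_hom d x : hom pr d x -> sgnh pr x = sgnz (oddz d.2) x.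
Proof.
move=> hx; rewrite /sgnh (fsumE (s := [:: d])) /= ?big_seq1 ?hx // => d'.
by rewrite inE -hx pr_pr => /negbTE ->; rewrite sgnz0.
Qed.

Lemma sgnh_morph : zmod_morphism (sgnh pr).
Proof.
have fin x : fin_supp (fun d : Γ * int => sgnz (oddz d.2) (pr d x)).
  have [s ex] := hom_decomp x; exists s => d ds.
  by rewrite ex (zmod_morph_sum (pr_morph d)) big_seq_cond big1 ?sgnz0 // => d' /andP[d's _];
    rewrite pr_pr; case: eqP => // ?; subst d'; rewrite d's in ds.
move=> x y; rewrite /sgnh -fsumB //; congr fsum; apply: functional_extensionality => d.
by rewrite (pr_morph d x y) sgnzB.
Qed.

Lemma sgnhB x y : sgnh pr (x - y) = sgnh pr x - sgnh pr y. Proof. exact: sgnh_morph. Qed.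
Lemma sgnhN x : sgnh pr (- x) = - sgnh pr x. Proof. exact: (zmod_morphN sgnh_morph). Qed.
Lemma sgnhMz x n : sgnh pr (x *~ n) = sgnh pr x *~ n. Proof. exact: (zmod_morphMz sgnh_morph). Qed.
Lemma sgnh_sum (I : Type) (r : seq I) (P : pred I) (F : I -> V) :
  sgnh pr (\sum_(i <- r | P i) F i) = \sum_(i <- r | P i) sgnh pr (F i).
Proof. exact: (zmod_morph_sum sgnh_morph). Qed.
End Grading.

Lemma sgnh_shift (Γ V W : zmodType) (pr : Γ * int -> V -> V) (pr' : Γ * int -> W -> W)
    (prV : is_grading pr) (prW : is_grading pr') (f : V -> W) (c : bool) :
  zmod_morphism f ->
  (forall d x, hom pr d x -> exists d', hom pr' d' (f x) /\ oddz d'.2 = oddz d.2 (+) c) ->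
  forall x, f (sgnh pr x) = sgnz c (sgnh pr' (f x)).
Proof.
move=> fB hf x; apply/eqP; rewrite -subr_eq0; apply/eqP; move: x.
apply: (hom_ind prV (f := fun x => f (sgnh pr x) - sgnz c (sgnh pr' (f x)))).
  apply: zmod_morph_sub => u v; first by rewrite (sgnhB prV) fB.
  by rewrite fB (sgnhB prW) sgnzB.
move=> d x hx; have [d' [hfx par]] := hf _ _ hx.
rewrite (sgnh_hom prV hx) (sgnh_hom prW hfx) (zmod_morph_sgnz fB) sgnz_sgnz par.
by rewrite addbC -addbA addbb addbF subrr.
Qed.

(** * Differential bigraded algebras and modules *)

Section DBGATheory.
Variables (k : nat) (Γ : zmodType) (B : dbga k Γ).
Notation e := (idem B).
Notation pr := (dpr B).
Implicit Types (a b : B).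

Lemma dbga_grading : is_grading pr. Proof. by case: (dbga_ax B). Qed.
Lemma mul_hom d d' a b : hom pr d a -> hom pr d' b -> hom pr (dadd d d') (a * b).
Proof. by case: (dbga_ax B) => _ [h _]; apply: h. Qed.
Lemma idem_mul i j : e i * e j = (if i == j then e i else 0).
Proof. by case: (dbga_ax B) => _ [_ [h _]]; apply: h. Qed.
Lemma sum_idem : \sum_i e i = 1. Proof. by case: (dbga_ax B) => _ [_ [_ [h _]]]. Qed.
Lemma idem_hom i : hom pr (0, 0) (e i).
Proof. by case: (dbga_ax B) => _ [_ [_ [_ [h _]]]]. Qed.
Lemma mu1_morph : zmod_morphism (mu1 B).
Proof. by case: (dbga_ax B) => _ [_ [_ [_ [_ [_ [_ [h _]]]]]]] x y; apply: h. Qed.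
Lemma mu1B a b : mu1 B (a - b) = mu1 B a - mu1 B b. Proof. exact: mu1_morph. Qed.
Lemma mu1_hom d a : hom pr d a -> hom pr (d.1, d.2 + 1) (mu1 B a).
Proof.
by case: (dbga_ax B) => _ [_ [_ [_ [_ [_ [_ [_ [h _]]]]]]]]; case: d => g q; apply: h.
Qed.
Lemma mu1M a b : mu1 B (a * b) = mu1 B a * sgnh pr b + a * mu1 B b.
Proof. by case: (dbga_ax B) => _ [_ [_ [_ [_ [_ [_ [_ [_ [_ [h _]]]]]]]]]]; apply: h. Qed.
Lemma mu1_idem i : mu1 B (e i) = 0.
Proof. by case: (dbga_ax B) => _ [_ [_ [_ [_ [_ [_ [_ [_ [_ [_ h]]]]]]]]]]; apply: h. Qed.
Lemma mu1_1 : mu1 B 1 = 0.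
Proof. by rewrite -sum_idem (zmod_morph_sum mu1_morph) big1 // => i _; apply: mu1_idem. Qed.

Lemma hom1 : hom pr (0, 0) 1.
Proof. by rewrite -sum_idem; apply: (hom_sum dbga_grading) => i _; apply: idem_hom. Qed.
Lemma hom_mul_idem d a i : hom pr d a -> hom pr d (a * e i).
Proof.
by move=> h; apply: (eq_hom (d := dadd d (0, 0))); [case: d {h} => ? ?; rewrite /dadd !addr0
  | apply: mul_hom h (idem_hom i)].
Qed.
Lemma hom_idem_mul d a i : hom pr d a -> hom pr d (e i * a).
Proof.
by move=> h; apply: (eq_hom (d := dadd (0, 0) d)); [case: d {h} => ? ?; rewrite /dadd !add0r
  | apply: mul_hom (idem_hom i) h].
Qed.
Lemma sgnh_idem i : sgnh pr (e i) = e i.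
Proof. by rewrite (sgnh_hom dbga_grading (idem_hom i)). Qed.
Lemma sgnh_mul_idem a i : sgnh pr (a * e i) = sgnh pr a * e i.
Proof.
rewrite (sgnh_shift dbga_grading dbga_grading (f := fun a => a * e i) (c := false)) //.
  by move=> x y; rewrite mulrBl.
by move=> d x hx; exists d; split; [apply: hom_mul_idem | rewrite addbF].
Qed.
Lemma mu1_mul_idem a i : mu1 B (a * e i) = mu1 B a * e i.
Proof. by rewrite mu1M sgnh_idem mu1_idem mulr0 addr0. Qed.
End DBGATheory.

Section DGModTheory.
Variables (k : nat) (Γ : zmodType) (B : dbga k Γ) (A : dgmod B).
Notation e := (idem B).
Notation act := (mact A).
Notation bas := (mbas A).
Notation coord := (mcoord A).
Notation bidem := (mbidem A).
Notation prA := (mpr A).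
Implicit Types (x y : A) (a b : B).

Lemma act_morphl a : zmod_morphism (act^~ a).
Proof. by case: (mod_ax A) => h _ x y; apply: h. Qed.
Lemma act_morphr x : zmod_morphism (act x).
Proof. by case: (mod_ax A) => _ [h _] a b; apply: h. Qed.
Lemma actBl x y a : act (x - y) a = act x a - act y a. Proof. exact: act_morphl. Qed.
Lemma act0r x : act x 0 = 0. Proof. exact: (zmod_morph0 (act_morphr x)). Qed.
Lemma actMzl x a n : act (x *~ n) a = act x a *~ n.
Proof. exact: (zmod_morphMz (act_morphl a)). Qed.
Lemma act_suml (I : Type) (r : seq I) (P : pred I) (F : I -> A) a :
  act (\sum_(i <- r | P i) F i) a = \sum_(i <- r | P i) act (F i) a.
Proof. exact: (zmod_morph_sum (act_morphl a)). Qed.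
Lemma actA x a b : act (act x a) b = act x (a * b).
Proof. by case: (mod_ax A) => _ [_ [_ [h _]]]. Qed.
Lemma dgmod_grading : is_grading prA. Proof. by case: (mod_ax A) => _ [_ [_ [_ [h _]]]]. Qed.
Lemma act_hom d d' x a : hom prA d x -> hom (dpr B) d' a -> hom prA (dadd d d') (act x a).
Proof. by case: (mod_ax A) => _ [_ [_ [_ [_ [h _]]]]]; apply: h. Qed.
Lemma m1_morph : zmod_morphism (m1 A).
Proof. by case: (mod_ax A) => _ [_ [_ [_ [_ [_ [h _]]]]]] x y; apply: h. Qed.
Lemma m1B x y : m1 A (x - y) = m1 A x - m1 A y. Proof. exact: m1_morph. Qed.
Lemma m1_hom d x : hom prA d x -> hom prA (d.1, d.2 + 1) (m1 A x).
Proof. by case: (mod_ax A) => _ [_ [_ [_ [_ [_ [_ [h _]]]]]]]; case: d => g q; apply: h. Qed.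
Lemma m1_act x a : m1 A (act x a) = act (m1 A x) (sgnh (dpr B) a) + act x (mu1 B a).
Proof. by case: (mod_ax A) => _ [_ [_ [_ [_ [_ [_ [_ [_ h]]]]]]]]; apply: h. Qed.

Lemma act_idem_hom d x i : hom prA d x -> hom prA d (act x (e i)).
Proof.
move=> hx; apply: (eq_hom (d := dadd d (0, 0))); last exact: act_hom hx (idem_hom B i).
by case: d {hx} => ? ?; rewrite /dadd !addr0.
Qed.

Lemma sgnh_act_idem x i : sgnh prA (act x (e i)) = act (sgnh prA x) (e i).
Proof.
rewrite (sgnh_shift dgmod_grading dgmod_grading (act_morphl _) (c := false)) //.
by move=> d y hy; exists d; split; [apply: act_idem_hom | rewrite addbF].
Qed.

Lemma m1_sgnh x : m1 A (sgnh prA x) = - sgnh prA (m1 A x).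
Proof.
rewrite (sgnh_shift dgmod_grading dgmod_grading m1_morph (c := true)) //.
by move=> d y hy; exists (d.1, d.2 + 1); split; [apply: m1_hom | rewrite /= oddzD].
Qed.

Lemma coord_morph j : zmod_morphism (coord^~ j).
Proof. by case: (mod_basis A) => h _ x y; apply: h. Qed.
Lemma coordB x y j : coord (x - y) j = coord x j - coord y j. Proof. exact: coord_morph. Qed.
Lemma coord0 j : coord 0 j = 0. Proof. exact: (zmod_morph0 (coord_morph j)). Qed.
Lemma coordMz x n j : coord (x *~ n) j = coord x j *~ n.
Proof. exact: (zmod_morphMz (coord_morph j)). Qed.
Lemma coord_sum (I : Type) (r : seq I) (P : pred I) (F : I -> A) j :
  coord (\sum_(i <- r | P i) F i) j = \sum_(i <- r | P i) coord (F i) j.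
Proof. exact: (zmod_morph_sum (coord_morph j)). Qed.
Lemma coord_bas j j' : coord (bas j) j' = (if j == j' then 1 else 0).
Proof. by case: (mod_basis A) => _ [h _]. Qed.
Lemma coord_supp x : exists s : seq (mJ A), forall j, j \notin s -> coord x j = 0.
Proof. by case: (mod_basis A) => _ [_ [/(_ x) [s [_ [h _]]] _]]; exists s. Qed.
Lemma basis_expand x (s : seq (mJ A)) : uniq s -> (forall j, j \notin s -> coord x j = 0) ->
  x = \sum_(j <- s) bas j *~ coord x j.
Proof.
move=> us hs; case: (mod_basis A) => _ [_ [/(_ x) [s0 [u0 [h0 ex]]] _]].
by rewrite {1}ex; apply: big_uniq_supp => // j; [move/h0 | move/hs] => ->; rewrite mulr0z.
Qed.
Lemma bas_hom j : exists d, hom prA d (bas j).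
Proof. by case: (mod_basis A) => _ [_ [_ [h _]]]. Qed.
Lemma bas_idem j : act (bas j) (e (bidem j)) = bas j.
Proof. by case: (mod_basis A) => _ [_ [_ [_ [h _]]]]. Qed.
Lemma bas_neq0 j : bas j <> 0.
Proof. by move=> h; have := coord_bas j j; rewrite h coord0 eqxx. Qed.

Lemma act_bas_idem j i : act (bas j) (e i) = if bidem j == i then bas j else 0.
Proof. by rewrite -{1}bas_idem actA idem_mul; case: eqP; rewrite ?bas_idem ?act0r. Qed.

Lemma coord_act_idem y i j : coord (act y (e i)) j = if bidem j == i then coord y j else 0.
Proof.
have [s hs] := coord_supp y.
rewrite (basis_expand (undup_uniq s) (x := y)); last by move=> j'; rewrite mem_undup; apply: hs.
rewrite act_suml !coord_sum; under eq_bigr => j' _ do rewrite actMzl act_bas_idem.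
case: eqP => hb.
  apply: eq_bigr => j' _; case: eqP => // h2.
  rewrite mul0rz coord0 coordMz coord_bas; case: eqP => [ej|]; last by rewrite mul0rz.
  by rewrite ej hb in h2.
rewrite big1 // => j' _; case: eqP => h2; last by rewrite mul0rz coord0.
rewrite coordMz coord_bas; case: eqP => [ej|]; last by rewrite mul0rz.
by rewrite -ej h2 in hb.
Qed.

Lemma coord_hom_neq d d' y j : hom prA d y -> hom prA d' (bas j) -> d <> d' -> coord y j = 0.
Proof.
move=> hy hj ndd'; have [s hs] := coord_supp y.
rewrite -hy (basis_expand (undup_uniq s) (x := y)); last by move=> j'; rewrite mem_undup; apply: hs.
rewrite (zmod_morph_sum (pr_morph dgmod_grading d)) coord_sum big1 // => j' _.
rewrite (zmod_morphMz (pr_morph dgmod_grading d)) coordMz.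
have [dj hdj] := bas_hom j'; rewrite -hdj pr_pr //; last exact: dgmod_grading.
case: eqP => [edj|_]; last by rewrite coord0 mul0rz.
subst dj; rewrite hdj coord_bas; case: eqP => [ej|]; rewrite ?mul0rz //; subst j'.
have := pr_pr dgmod_grading d d' (bas j).
by rewrite hj hdj; case: eqP => [/ndd' | _ /bas_neq0].
Qed.
End DGModTheory.

(** * Elements of C (x)_I A and maps of Type D structures *)

Section Tensor.
Variables (k : nat) (Γ : zmodType) (B C : dbga k Γ) (A : dgmod B).
Notation ec := (idem C).
Notation coord := (mcoord A).
Notation bidem := (mbidem A).
Notation prA := (mpr A).
Notation tens := (@tens k Γ B C A).
Implicit Types (c : C) (y : A).

Lemma tensE c y j : tens c y j = (c * ec (bidem j)) *~ coord y j. Proof. by []. Qed.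
Lemma tens_morphl y j : zmod_morphism (fun c : C => tens c y j).
Proof. by move=> a b; rewrite !tensE mulrBl mulrzBl. Qed.
Lemma tens_morphr c j : zmod_morphism (fun y : A => tens c y j).
Proof. by move=> a b; rewrite !tensE coordB mulrzBr. Qed.
Lemma tens0l y j : tens 0 y j = 0. Proof. exact: (zmod_morph0 (tens_morphl y j)). Qed.
Lemma tens0r c j : tens c (0 : A) j = 0. Proof. exact: (zmod_morph0 (tens_morphr c j)). Qed.
Lemma tensBl a b y j : tens (a - b) y j = tens a y j - tens b y j. Proof. exact: tens_morphl. Qed.
Lemma tensBr c a b j : tens c (a - b) j = tens c a j - tens c b j. Proof. exact: tens_morphr. Qed.
Lemma tensDr c a b j : tens c (a + b) j = tens c a j + tens c b j.
Proof. exact: (zmod_morphD (tens_morphr c j)). Qed.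
Lemma tensNr c a j : tens c (- a) j = - tens c a j.
Proof. exact: (zmod_morphN (tens_morphr c j)). Qed.
Lemma tensMzl a n y j : tens (a *~ n) y j = tens a y j *~ n.
Proof. exact: (zmod_morphMz (tens_morphl y j)). Qed.
Lemma tensMzr c a n j : tens c (a *~ n) j = tens c a j *~ n.
Proof. exact: (zmod_morphMz (tens_morphr c j)). Qed.
Lemma tens_suml (I : Type) (r : seq I) (P : pred I) (F : I -> C) y j :
  tens (\sum_(i <- r | P i) F i) y j = \sum_(i <- r | P i) tens (F i) y j.
Proof. exact: (zmod_morph_sum (tens_morphl y j)). Qed.
Lemma tens_sumr (I : Type) (r : seq I) (P : pred I) (F : I -> A) c j :
  tens c (\sum_(i <- r | P i) F i) j = \sum_(i <- r | P i) tens c (F i) j.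
Proof. exact: (zmod_morph_sum (tens_morphr c j)). Qed.
Lemma tens_sgnzr b c a j : tens c (sgnz b a) j = sgnz b (tens c a j).
Proof. exact: (zmod_morph_sgnz (tens_morphr c j)). Qed.
Lemma tensMl a c y j : tens (a * c) y j = a * tens c y j.
Proof. by rewrite !tensE mulrzAr mulrA. Qed.
Lemma tens_act_idem c y i j : tens c (mact A y (idem B i)) j = tens (c * ec i) y j.
Proof.
rewrite !tensE coord_act_idem -mulrA idem_mul eq_sym.
by case: eqP => [->//|_]; rewrite mulr0 mul0rz.
Qed.
Lemma tens_mul_idem c y j : tens c y j * ec (bidem j) = tens c y j.
Proof. by rewrite !tensE mulrzAl -mulrA idem_mul eqxx. Qed.

Lemma tens_hom dc dy d' c y j : hom (dpr C) dc c -> hom prA dy y -> hom prA d' (mbas A j) ->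
  hom (dpr C) (dsub (dadd dc dy) d') (tens c y j).
Proof.
move=> hc hy hj; have [<-|ndy] := eqVneq dy d'.
  apply: (eq_hom (d := dc)); first by case: dc {hc} => ? ?; case: dy {hy hj} => ? ?;
    rewrite /dsub /dadd /= !addrK.
  by apply: (homMz (dbga_grading C)); apply: hom_mul_idem.
rewrite !tensE (coord_hom_neq hy hj); last exact/eqP.
by rewrite mulr0z; apply: hom0; apply: dbga_grading.
Qed.

Definition tens_sum (ps : seq (C * A)) : mJ A -> C :=
  fun j => \sum_(p <- ps) tens p.1 p.2 j.

Lemma tens_sum_supp (ps : seq (C * A)) : exists s : seq (mJ A),
  uniq s /\ forall p, p \in ps -> forall j, j \notin s -> coord p.2 j = 0.
Proof.
elim: ps => [|p ps [s [us hs]]]; first by exists [::].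
have [s' hs'] := coord_supp p.2.
exists (undup (s ++ s')); split; first exact: undup_uniq.
move=> q; rewrite inE => /orP[/eqP -> | qps] j;
  rewrite mem_undup mem_cat negb_or => /andP[js js'];
  by [apply: hs' | apply: hs].
Qed.

Lemma tens_sum_elt ps : tensor_elt (tens_sum ps).
Proof.
split; last by move=> j; rewrite /tens_sum mulr_suml; apply: eq_bigr => p _; rewrite tens_mul_idem.
have [s [_ hs]] := tens_sum_supp ps; exists s => j js.
by rewrite /tens_sum big_seq big1 // => p /hs /(_ j js) hp; rewrite !tensE hp mulr0z.
Qed.

End Tensor.

Section TensorCalculus.
Variables (k : nat) (Γ : zmodType) (B C : dbga k Γ) (A1 A2 A3 : dgmod B).
Notation tens := (@tens k Γ B C).

Lemma dcomp_tens_sum (Psi : A2 -> mJ A3 -> C) (Phi : A1 -> mJ A2 -> C) x ps j :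
  (forall y z j, Psi (y - z) j = Psi y j - Psi z j) ->
  (forall y i j, Psi (mact A2 y (idem B i)) j = idem C i * Psi y j) ->
  (forall j', Phi x j' = tens_sum ps j') ->
  dcomp Phi Psi x j = \sum_(p <- ps) p.1 * Psi p.2 j.
Proof.
move=> PsiB PsiI hPhi; have PsiM : zmod_morphism (Psi^~ j) by move=> y z; apply: PsiB.
have [s [us hs]] := tens_sum_supp ps.
rewrite /dcomp (fsumE (s := s)) => [|j' j's]; last first.
  by rewrite hPhi /tens_sum big_seq big1 ?mul0r // => p /hs /(_ j' j's) hp; rewrite tensE hp mulr0z.
rewrite undup_id //; under eq_bigr do rewrite hPhi /tens_sum mulr_suml.
rewrite exchange_big big_seq [RHS]big_seq; apply: eq_bigr => p /hs hp.
rewrite {2}(basis_expand us hp) (zmod_morph_sum PsiM) mulr_sumr; apply: eq_bigr => j' _.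
by rewrite (zmod_morphMz PsiM) tensE mulrzAl mulrzAr -mulrA -PsiI bas_idem.
Qed.

Lemma dmu1_tens_sum (Phi : A1 -> mJ A2 -> C) x ps j :
  (forall j', Phi x j' = tens_sum ps j') ->
  dmu1 Phi x j = tens_sum [seq (mu1 C p.1, sgnh (mpr A2) p.2) | p <- ps] j.
Proof.
move=> hPhi; have [s [us hs]] := tens_sum_supp ps.
have mu1M := @mu1_morph _ _ C.
rewrite /dmu1 (fsumE (s := s)) => [|j' j's]; last first.
  rewrite hPhi /tens_sum big_seq big1 ?(zmod_morph0 mu1M) ?tens0l // => p /hs /(_ j' j's) hp.
  by rewrite tensE hp mulr0z.
rewrite undup_id //; under eq_bigr do rewrite hPhi /tens_sum (zmod_morph_sum mu1M) tens_suml.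
rewrite exchange_big /tens_sum big_map /= big_seq [RHS]big_seq; apply: eq_bigr => p /hs hp.
rewrite [X in sgnh _ X](basis_expand us hp) (sgnh_sum (dgmod_grading A2)) tens_sumr.
apply: eq_bigr => j' _.
rewrite [tens p.1 p.2 j']tensE (zmod_morphMz mu1M) mu1_mul_idem tensMzl.
by rewrite (sgnhMz (dgmod_grading A2)) tensMzr -tens_act_idem -sgnh_act_idem bas_idem.
Qed.

Lemma dcomp_morph (Phi : A1 -> mJ A2 -> C) (Psi : A2 -> mJ A3 -> C) j :
  (forall x y j, Phi (x - y) j = Phi x j - Phi y j) -> (forall x, fin_supp (Phi x)) ->
  zmod_morphism (fun x => dcomp Phi Psi x j).
Proof.
move=> PhiB PhiF x y; have fin z : fin_supp (fun j' => Phi z j' * Psi (mbas A2 j') j).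
  by have [s hs] := PhiF z; exists s => j' /hs ->; rewrite mul0r.
rewrite /dcomp -fsumB //; congr fsum; apply: functional_extensionality => j'.
by rewrite PhiB mulrBl.
Qed.

Lemma dmu1_morph (Phi : A1 -> mJ A2 -> C) j :
  (forall x y j, Phi (x - y) j = Phi x j - Phi y j) -> (forall x, fin_supp (Phi x)) ->
  zmod_morphism (fun x => dmu1 Phi x j).
Proof.
move=> PhiB PhiF x y.
have fin z : fin_supp (fun j' => tens (mu1 C (Phi z j')) (sgnh (mpr A2) (mbas A2 j')) j).
  have [s hs] := PhiF z; exists s => j' /hs ->.
  by rewrite (zmod_morph0 (@mu1_morph _ _ C)) tens0l.
rewrite /dmu1 -fsumB //; congr fsum; apply: functional_extensionality => j'.
by rewrite PhiB mu1B tensBl.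
Qed.
End TensorCalculus.

Section TensorShape.
Variables (k : nat) (Γ : zmodType) (B C : dbga k Γ) (A1 A2 A3 : dgmod B).
Variables (T : Type) (ts : seq T) (cf : T -> C) (yf : T -> A2) (c0 : C) (y0 : A2).
Variables (Phi : A1 -> mJ A2 -> C) (x : A1).
Hypothesis Phi_shape :
  forall j, Phi x j = tens c0 y0 j + \sum_(t <- ts) tens (cf t) (yf t) j.

Let Phi_tens_sum j :
  Phi x j = tens_sum ((c0, y0) :: [seq (cf t, yf t) | t <- ts]) j.
Proof. by rewrite Phi_shape /tens_sum big_cons big_map. Qed.

Lemma shape_elt : tensor_elt (Phi x).
Proof.
have -> : Phi x = tens_sum ((c0, y0) :: [seq (cf t, yf t) | t <- ts]).
  by apply: functional_extensionality => j; apply: Phi_tens_sum.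
exact: tens_sum_elt.
Qed.

Lemma dcomp_shape (Psi : A2 -> mJ A3 -> C) j :
  (forall y z j, Psi (y - z) j = Psi y j - Psi z j) ->
  (forall y i j, Psi (mact A2 y (idem B i)) j = idem C i * Psi y j) ->
  dcomp Phi Psi x j = c0 * Psi y0 j + \sum_(t <- ts) cf t * Psi (yf t) j.
Proof. by move=> PsiB PsiI; rewrite (dcomp_tens_sum _ PsiB PsiI Phi_tens_sum) big_cons big_map. Qed.

Lemma dmu1_shape j : dmu1 Phi x j =
  tens (mu1 C c0) (sgnh (mpr A2) y0) j +
  \sum_(t <- ts) tens (mu1 C (cf t)) (sgnh (mpr A2) (yf t)) j.
Proof. by rewrite (dmu1_tens_sum _ Phi_tens_sum) /tens_sum /= big_cons -map_comp big_map. Qed.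
End TensorShape.

(** * The Type D structure A [x] DD *)

Definition sgnh_if (Γ V : zmodType) (pr : Γ * int -> V -> V) (g : bool) (z : V) :=
  if g then sgnh pr z else z.
Definition opp_sgnh_if (Γ V : zmodType) (pr : Γ * int -> V -> V) (g : bool) (z : V) :=
  if g then - sgnh pr z else z.

Section ConditionalSigns.
Variables (Γ V : zmodType) (pr : Γ * int -> V -> V) (prV : is_grading pr).

Lemma sgnh_if_morph g : zmod_morphism (sgnh_if pr g).
Proof. by case: g => x y //=; rewrite /sgnh_if (sgnhB prV). Qed.
Lemma opp_sgnh_if_morph g : zmod_morphism (opp_sgnh_if pr g).
Proof. by case: g => x y //=; rewrite /opp_sgnh_if (sgnhB prV) opprB addrC opprK. Qed.
Lemma sgnh_if_hom g d z : hom pr d z -> sgnh_if pr g z = sgnz (g && oddz d.2) z.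
Proof. by case: g => //= hz; rewrite /sgnh_if (sgnh_hom prV hz). Qed.
Lemma opp_sgnh_if_hom g d z : hom pr d z -> opp_sgnh_if pr g z = sgnz (g && ~~ oddz d.2) z.
Proof. by rewrite /opp_sgnh_if; case: g => //= hz; rewrite (sgnh_hom prV hz) opp_sgnz. Qed.
End ConditionalSigns.

Lemma m1_opp_sgnh_if k Γ (B : dbga k Γ) (A : dgmod B) g x :
  m1 A (opp_sgnh_if (mpr A) g x) = sgnh_if (mpr A) g (m1 A x).
Proof.
by case: g => //=; rewrite /opp_sgnh_if /sgnh_if (zmod_morphN (m1_morph (A := A))) m1_sgnh opprK.
Qed.

Section RankOneDD.
Variables (k : nat) (Γ : zmodType) (B C : dbga k Γ) (ds : seq (ddterm B C (Γ * int))).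
Hypothesis DD : is_rank1_DD ds.
Implicit Type t : ddterm B C (Γ * int).

Lemma ddterm_a_hom t : List.In t ds -> hom (dpr B) (ddda t) (dda t).
Proof. by case: DD => h _; apply: h. Qed.
Lemma ddterm_c_hom t : List.In t ds -> hom (dpr C) (dddc t) (ddc t).
Proof. by case: DD => _ [h _]; apply: h. Qed.
Lemma ddterm_deg t : List.In t ds -> dadd (ddda t) (dddc t) = (0, 1).
Proof. by case: DD => _ [_ [h _]]; apply: h. Qed.
Lemma ddterm_parity t : List.In t ds -> oddz (dddc t).2 = ~~ oddz (ddda t).2.
Proof.
move=> /ddterm_deg; case: (ddda t) => ? a2; case: (dddc t) => ? c2 [_ /= h].
have -> : c2 = 1 - a2 by rewrite -h addrC addKr.
by rewrite oddzB.
Qed.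

Section Balanced.
Variables (Z : zmodType) (beta : B -> C -> Z).
Hypothesis betaBl : forall a a' c, beta (a - a') c = beta a c - beta a' c.
Hypothesis betaBr : forall a c c', beta a (c - c') = beta a c - beta a c'.
Hypothesis beta_idem : forall a i c, beta (a * idem B i) c = beta a (c * idem C i).

Lemma dd_idem_commute i : \sum_(t <- ds) beta (idem B i * dda t) (ddc t) =
  \sum_(t <- ds) beta (dda t) (idem C i * ddc t).
Proof.
have betaN a c : beta (- a) c = - beta a c.
  have beta0 : beta 0 c = 0 by have := betaBl 0 0 c; rewrite subr0 subrr.
  by rewrite -[- a]sub0r betaBl beta0 sub0r.
case: DD => _ [_ [_ [/(_ i Z beta betaBl betaBr beta_idem) + _]]].
rewrite big_cat !big_map /=; under [X in _ + X = _]eq_bigr do rewrite betaN.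
by rewrite sumrN => /eqP; rewrite subr_eq0 => /eqP.
Qed.

Lemma dd_structure_eq :
  \sum_(t <- ds) beta (sgnz (oddz (dddc t).2) (mu1 B (dda t))) (ddc t) +
  \sum_(t <- ds) beta (dda t) (mu1 C (ddc t)) +
  \sum_(s <- ds) \sum_(t <- ds)
     beta (sgnz (oddz (ddda t).2 && oddz (dddc s).2) (dda s * dda t)) (ddc s * ddc t) = 0.
Proof.
case: DD => _ [_ [_ [_ /(_ Z beta betaBl betaBr beta_idem)]]].
by rewrite !big_cat /= !big_map /= big_allpairs_dep /= addrA.
Qed.
End Balanced.

Lemma dd_idem_transport (A : dgmod B) (f : B -> A) (g : ddterm B C (Γ * int) -> B -> A) i j :
  zmod_morphism f -> (forall a i, f (a * idem B i) = mact A (f a) (idem B i)) ->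
  (forall t a, List.In t ds -> hom (dpr B) (ddda t) a -> g t a = f a) ->
  \sum_(t <- ds) tens (ddc t) (g t (idem B i * dda t)) j =
  idem C i * \sum_(t <- ds) tens (ddc t) (g t (dda t)) j.
Proof.
move=> fB f_idem gf.
have -> : \sum_(t <- ds) tens (ddc t) (g t (idem B i * dda t)) j =
    \sum_(t <- ds) tens (ddc t) (f (idem B i * dda t)) j.
  by apply: big_In_eq => t it; rewrite gf //; apply/hom_idem_mul/ddterm_a_hom.
have -> : \sum_(t <- ds) tens (ddc t) (g t (dda t)) j = \sum_(t <- ds) tens (ddc t) (f (dda t)) j.
  by apply: big_In_eq => t it; rewrite gf //; apply: ddterm_a_hom.
rewrite mulr_sumr; under [RHS]eq_bigr do rewrite -tensMl.
apply: (dd_idem_commute (beta := fun a c => tens c (f a) j)) => [a a' c|a c c'|a i' c].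
- by rewrite fB tensBr.
- by rewrite tensBl.
- by rewrite f_idem tens_act_idem.
Qed.
End RankOneDD.


Section BoxDelta.
Variables (k : nat) (Γ : zmodType) (B C : dbga k Γ) (ds : seq (ddterm B C (Γ * int))).
Hypothesis DD : is_rank1_DD ds.
Variable A : dgmod B.
Notation delta := (box_delta ds : A -> mJ A -> C).
Notation act := (mact A).

Lemma box_delta_shape x j : delta x j = tens 1 (m1 A x) j +
  \sum_(t <- ds) tens (ddc t) (sgnh_if (mpr A) (oddz (dddc t).2) (act x (dda t))) j.
Proof. by []. Qed.

Lemma box_deltaB x y j : delta (x - y) j = delta x j - delta y j.
Proof.
rewrite !box_delta_shape m1B tensBr opprD addrACA -sumrB; congr (_ + _).
by apply: eq_bigr => t _; rewrite actBl (sgnh_if_morph (dgmod_grading A)) tensBr.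
Qed.

Lemma box_delta_fin x : fin_supp (delta x).
Proof.
by case: (shape_elt (ts := ds) (cf := fun t => ddc t) (c0 := 1) (y0 := m1 A x)
  (yf := fun t => sgnh_if (mpr A) (oddz (dddc t).2) (act x (dda t))) (Phi := delta) (x := x)
  (fun j => erefl)).
Qed.

(* The sign (-1)^{deg(x a) deg(c)} only depends on deg x, since deg a + deg c = 1. *)
Lemma sgnh_if_act d x da a : hom (mpr A) d x -> hom (dpr B) da a ->
  sgnh_if (mpr A) (~~ oddz da.2) (act x a) = act x (opp_sgnh_if (dpr B) (oddz d.2) a).
Proof.
move=> hx ha; rewrite (sgnh_if_hom (dgmod_grading A) _ (act_hom hx ha)).
rewrite (opp_sgnh_if_hom (dbga_grading B) _ ha) (zmod_morph_sgnz (act_morphr x)) /= oddzD.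
by case: (oddz d.2); case: (oddz da.2).
Qed.

Lemma box_delta_idem x i j : delta (act x (idem B i)) j = idem C i * delta x j.
Proof.
apply/eqP; rewrite -subr_eq0; apply/eqP; move: x.
apply: (hom_ind (dgmod_grading A)
  (f := fun x => delta (act x (idem B i)) j - idem C i * delta x j)).
  by apply: zmod_morph_sub => x y; rewrite ?actBl box_deltaB ?mulrBr.
move=> d x hx; apply/eqP; rewrite subr_eq0; apply/eqP.
rewrite !box_delta_shape mulrDr m1_act sgnh_idem mu1_idem act0r addr0 tens_act_idem mul1r.
rewrite -tensMl mulr1; congr (_ + _).
under eq_bigr do rewrite actA.
apply: (dd_idem_transport DD (f := fun a => act x (opp_sgnh_if (dpr B) (oddz d.2) a))
  (g := fun t a => sgnh_if (mpr A) (oddz (dddc t).2) (act x a))).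
- by move=> a b; rewrite (opp_sgnh_if_morph (dbga_grading B)) (act_morphr x).
- by move=> a i'; rewrite actA /opp_sgnh_if; case: (oddz d.2); rewrite ?sgnh_mul_idem ?mulNr.
- by move=> t a it ha; rewrite (ddterm_parity DD it) (sgnh_if_act hx ha).
Qed.
End BoxDelta.

(** * Boxing an A-infinity morphism with DD *)

Section AinfMorphism.
Variables (k : nat) (Γ : zmodType) (B : dbga k Γ) (A A' : dgmod B).
Variables (F1 : A -> A') (F2 : A -> B -> A').
Hypothesis F : is_ainf2 F1 F2.
Notation e := (idem B).

Lemma F1_morph : zmod_morphism F1. Proof. by case: F => h _ x y; apply: h. Qed.
Lemma F1_idem x i : F1 (mact A x (e i)) = mact A' (F1 x) (e i).
Proof. by case: F => _ [h _]; apply: h. Qed.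
Lemma F1_hom d x : hom (mpr A) d x -> hom (mpr A') d (F1 x).
Proof. by case: F => _ [_ [h _]]; apply: h. Qed.
Lemma F2_morphl a : zmod_morphism (F2^~ a).
Proof. by case: F => _ [_ [_ [h _]]] x y; apply: h. Qed.
Lemma F2_morphr x : zmod_morphism (F2 x).
Proof. by case: F => _ [_ [_ [_ [h _]]]] a b; apply: h. Qed.
Lemma F2_idem_mul x i a : F2 (mact A x (e i)) a = F2 x (e i * a).
Proof. by case: F => _ [_ [_ [_ [_ [h _]]]]]; apply: h. Qed.
Lemma F2_mul_idem x a i : F2 x (a * e i) = mact A' (F2 x a) (e i).
Proof. by case: F => _ [_ [_ [_ [_ [_ [h _]]]]]]; apply: h. Qed.
Lemma F2_hom d da x a : hom (mpr A) d x -> hom (dpr B) da a ->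
  hom (mpr A') (d.1 + da.1, d.2 + da.2 - 1) (F2 x a).
Proof.
by case: F => _ [_ [_ [_ [_ [_ [_ [h _]]]]]]]; case: d => ? ?; case: da => ? ?; apply: h.
Qed.
Lemma F1_m1 x : m1 A' (F1 x) = F1 (m1 A x).
Proof. by case: F => _ [_ [_ [_ [_ [_ [_ [_ [h _]]]]]]]]; apply: h. Qed.
Lemma F2_m1 x a : m1 A' (F2 x a) + mact A' (F1 x) a =
  F1 (mact A x a) - F2 (m1 A x) (sgnh (dpr B) a) - F2 x (mu1 B a).
Proof. by case: F => _ [_ [_ [_ [_ [_ [_ [_ [_ [h _]]]]]]]]]; apply: h. Qed.
Lemma F2_mul x a b : - mact A' (F2 x a) (sgnh (dpr B) b) = F2 (mact A x a) b - F2 x (a * b).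
Proof. by case: F => _ [_ [_ [_ [_ [_ [_ [_ [_ [_ h]]]]]]]]]; apply: h. Qed.

Lemma F1_sgnh_if g x : F1 (sgnh_if (mpr A) g x) = sgnh_if (mpr A') g (F1 x).
Proof.
case: g => //; rewrite /sgnh_if.
rewrite (sgnh_shift (dgmod_grading A) (dgmod_grading A') F1_morph (c := false)) //.
by move=> d y hy; exists d; split; [apply: F1_hom | rewrite addbF].
Qed.
Lemma F1_opp_sgnh_if g x : F1 (opp_sgnh_if (mpr A) g x) = opp_sgnh_if (mpr A') g (F1 x).
Proof.
by case: g => //; rewrite /opp_sgnh_if (zmod_morphN F1_morph) -!/(sgnh_if _ true _) F1_sgnh_if.
Qed.
End AinfMorphism.

Definition box_morph k Γ (B C : dbga k Γ) (ds : seq (ddterm B C (Γ * int))) (A A' : dgmod B)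
    (F1 : A -> A') (F2 : A -> B -> A') : A -> mJ A' -> C :=
  fun x j => tens 1 (F1 x) j +
    \sum_(t <- ds) tens (ddc t) (opp_sgnh_if (mpr A') (oddz (dddc t).2) (F2 x (dda t))) j.

Section BoxMorph.
Variables (k : nat) (Γ : zmodType) (B C : dbga k Γ) (ds : seq (ddterm B C (Γ * int))).
Hypothesis DD : is_rank1_DD ds.
Variables (A A' : dgmod B) (F1 : A -> A') (F2 : A -> B -> A').
Hypothesis F : is_ainf2 F1 F2.
Notation Phi := (box_morph ds F1 F2).
Notation osg := (opp_sgnh_if (mpr A')).

Lemma box_morph_shape x j : Phi x j = tens 1 (F1 x) j +
  \sum_(t <- ds) tens (ddc t) (osg (oddz (dddc t).2) (F2 x (dda t))) j.
Proof. by []. Qed.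

Lemma box_morphB x y j : Phi (x - y) j = Phi x j - Phi y j.
Proof.
rewrite /box_morph (F1_morph F) tensBr opprD addrACA -sumrB; congr (_ + _).
by apply: eq_bigr => t _; rewrite (F2_morphl F) (opp_sgnh_if_morph (dgmod_grading A')) tensBr.
Qed.

Lemma box_morph_elt x : tensor_elt (Phi x).
Proof.
by apply: (shape_elt (ts := ds) (cf := fun t => ddc t) (c0 := 1) (y0 := F1 x)
  (yf := fun t => osg (oddz (dddc t).2) (F2 x (dda t)))).
Qed.

Lemma opp_sgnh_if_F2 d x da a : hom (mpr A) d x -> hom (dpr B) da a ->
  osg (~~ oddz da.2) (F2 x a) = F2 x (opp_sgnh_if (dpr B) (oddz d.2) a).
Proof.
move=> hx ha; rewrite (opp_sgnh_if_hom (dgmod_grading A') _ (F2_hom F hx ha)).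
rewrite (opp_sgnh_if_hom (dbga_grading B) _ ha) (zmod_morph_sgnz (F2_morphr F x)) /= oddzB oddzD.
by case: (oddz d.2); case: (oddz da.2).
Qed.

Lemma box_morph_idem x i j : Phi (mact A x (idem B i)) j = idem C i * Phi x j.
Proof.
apply/eqP; rewrite -subr_eq0; apply/eqP; move: x.
apply: (hom_ind (dgmod_grading A) (f := fun x => Phi (mact A x (idem B i)) j - idem C i * Phi x j)).
  by apply: zmod_morph_sub => x y; rewrite ?actBl box_morphB ?mulrBr.
move=> d x hx; apply/eqP; rewrite subr_eq0; apply/eqP.
rewrite /box_morph mulrDr (F1_idem F) tens_act_idem mul1r -tensMl mulr1; congr (_ + _).
under eq_bigr do rewrite (F2_idem_mul F).
apply: (dd_idem_transport DD (f := fun a => F2 x (opp_sgnh_if (dpr B) (oddz d.2) a))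
  (g := fun t a => osg (oddz (dddc t).2) (F2 x a))).
- by move=> a b; rewrite (opp_sgnh_if_morph (dbga_grading B)) (F2_morphr F x).
- by move=> a i'; rewrite -(F2_mul_idem F) /opp_sgnh_if; case: (oddz d.2);
    rewrite ?sgnh_mul_idem ?mulNr.
- by move=> t a it ha; rewrite (ddterm_parity DD it) (opp_sgnh_if_F2 hx ha).
Qed.

Lemma box_morph_hom d x j d' : hom (mpr A) d x -> hom (mpr A') d' (mbas A' j) ->
  hom (dpr C) (dsub (dadd d (0, 0)) d') (Phi x j).
Proof.
move=> hx hj; apply: (homD (dbga_grading C)).
  apply: (eq_hom _ (tens_hom (hom1 C) (F1_hom F hx) hj)).
  by case: d {hx} => ? ?; rewrite /dadd /= !add0r !addr0.
apply: (hom_sum_In (dbga_grading C)) => t it.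
have hz := F2_hom F hx (ddterm_a_hom DD it).
rewrite (opp_sgnh_if_hom (dgmod_grading A') _ hz).
apply: (eq_hom _ (tens_hom (ddterm_c_hom DD it) (hom_sgnz _ _ hz) hj)); last exact: dgmod_grading.
move: (ddterm_deg DD it); case: (ddda t) => ga qa; case: (dddc t) => gc qc.
case: d {hx hz} => g q; rewrite /dadd /= => -[h1 h2]; congr (dsub (_, _) d').
- by rewrite addrCA [gc + _]addrC h1.
- lia.
Qed.
End BoxMorph.

Lemma subr_rearrange (V : zmodType) (f p m u w : V) : m + p = f - u - w -> f - p - m = u + w.
Proof.
move=> h; have -> : f = m + p + w + u by rewrite h !subrK.
by rewrite -addrA -opprD [p + m]addrC addrAC [m + p + w]addrC addrK addrC.
Qed.

Lemma sgnz_cancel (V : zmodType) (X Y : V) b1 b2 b3 b4 : b1 (+) b4 = b2 -> b1 = b3 ->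
  sgnz b1 (sgnz b4 X + Y) - sgnz b2 X = sgnz b3 Y.
Proof.
move=> <- <-; case: b1; case: b4 => /=; rewrite ?opprD ?opprK;
  by rewrite addrAC ?subrr ?addNr ?add0r.
Qed.

Lemma big_regroup (V : zmodType) (T : Type) (ts : seq T) (P0 : V) (a1 a2 b1 b2 l : T -> V)
    (p1 p2 : T -> T -> V) :
  (P0 + \sum_(t <- ts) a1 t + \sum_(t <- ts) (a2 t + \sum_(u <- ts) p1 t u)) -
  (P0 + \sum_(t <- ts) b1 t + \sum_(t <- ts) (b2 t + \sum_(u <- ts) p2 t u)) -
  \sum_(t <- ts) l t =
  \sum_(t <- ts) (a1 t + a2 t - b1 t - b2 t - l t) +
  \sum_(t <- ts) \sum_(u <- ts) (p1 t u - p2 t u).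
Proof.
rewrite -(addrA P0 (\sum_(t <- ts) a1 t)) -(addrA P0 (\sum_(t <- ts) b1 t)) -!big_split /=.
rewrite opprD addrACA subrr add0r -!sumrB; apply: eq_bigr => t _; rewrite sumrB.
set S1 := \sum_(u <- ts) p1 t u; set S2 := \sum_(u <- ts) p2 t u.
rewrite !opprD !addrA.
by rewrite (addrAC _ S1) (addrAC _ S1) (addrAC _ (- S2)) (addrAC _ S1 (- l t)).
Qed.

Section BoxMorphEquation.
Variables (k : nat) (Γ : zmodType) (B C : dbga k Γ) (ds : seq (ddterm B C (Γ * int))).
Hypothesis DD : is_rank1_DD ds.
Variables (A A' : dgmod B) (F1 : A -> A') (F2 : A -> B -> A').
Hypothesis F : is_ainf2 F1 F2.
Notation sg := (sgnh_if (mpr A')).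
Notation osg := (opp_sgnh_if (mpr A')).
Notation tens := (@tens k Γ B C A').

Definition box_morph_test (d : Γ * int) (x : A) (j : mJ A') (a : B) (c : C) :=
  tens c (F2 x (sgnh_if (dpr B) (~~ oddz d.2) a)) j.
Notation beta := box_morph_test.

Lemma box_morph_testBl d x j a a' c : beta d x j (a - a') c = beta d x j a c - beta d x j a' c.
Proof. by rewrite /beta (sgnh_if_morph (dbga_grading B)) (F2_morphr F) tensBr. Qed.
Lemma box_morph_testBr d x j a c c' : beta d x j a (c - c') = beta d x j a c - beta d x j a c'.
Proof. by rewrite /beta tensBl. Qed.
Lemma box_morph_test_idem d x j a i c : beta d x j (a * idem B i) c = beta d x j a (c * idem C i).
Proof.
rewrite /beta -tens_act_idem -(F2_mul_idem F); congr (tens c (F2 x _) j).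
by rewrite /sgnh_if; case: (~~ oddz d.2); rewrite ?sgnh_mul_idem.
Qed.

Lemma box_morph_linear_term d x t j : hom (mpr A) d x -> List.In t ds ->
  let g := oddz (dddc t).2 in let a := dda t in let c := ddc t in
  tens c (osg g (F2 (m1 A x) a)) j + tens c (F1 (sgnh_if (mpr A) g (mact A x a))) j -
  tens c (sg g (mact A' (F1 x) a)) j - tens c (m1 A' (osg g (F2 x a))) j -
  tens (mu1 C c) (sgnh (mpr A') (osg g (F2 x a))) j =
  beta d x j (sgnz g (mu1 B a)) c + beta d x j a (mu1 C c).
Proof.
move=> hx it g a c.
have ha : hom (dpr B) (ddda t) a := ddterm_a_hom DD it.
have par : g = ~~ oddz (ddda t).2 := ddterm_parity DD it.
rewrite (F1_sgnh_if F) m1_opp_sgnh_if.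
have relation2 : tens c (sg g (F1 (mact A x a))) j - tens c (sg g (mact A' (F1 x) a)) j -
    tens c (sg g (m1 A' (F2 x a))) j =
    tens c (sg g (F2 (m1 A x) (sgnh (dpr B) a))) j + tens c (sg g (F2 x (mu1 B a))) j.
  rewrite -!tensBr -tensDr -!(sgnh_if_morph (dgmod_grading A')).
  rewrite -(zmod_morphD (sgnh_if_morph (dgmod_grading A') g)).
  by rewrite (subr_rearrange (F2_m1 F x a)).
have cancel : tens c (osg g (F2 (m1 A x) a)) j +
    tens c (sg g (F2 (m1 A x) (sgnh (dpr B) a))) j = 0.
  rewrite (sgnh_hom (dbga_grading B) ha) (zmod_morph_sgnz (F2_morphr F _)).
  rewrite (zmod_morph_sgnz (sgnh_if_morph (dgmod_grading A') g)) par /opp_sgnh_if /sgnh_if.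
  by case: (oddz (ddda t).2) => /=; rewrite tensNr ?addNr ?subrr.
have regroup (X1 X2 X3 X4 X5 : C) : X1 + X2 - X3 - X4 - X5 = X1 + (X2 - X3 - X4) - X5.
  by rewrite !addrA.
rewrite regroup relation2 addrA cancel add0r.
congr (_ + _).
  have hm := mu1_hom ha; have hz' := F2_hom F hx hm.
  rewrite /beta (sgnh_if_hom (dgmod_grading A') _ hz').
  rewrite (sgnh_if_hom (dbga_grading B) _ (hom_sgnz (dbga_grading B) g hm)).
  rewrite sgnz_sgnz !(zmod_morph_sgnz (F2_morphr F _)) !tens_sgnzr; congr (sgnz _ _).
  rewrite par /= oddzB !oddzD.
  by case: (oddz d.2); case: (oddz (ddda t).2).
have hz := F2_hom F hx ha.
rewrite /beta (opp_sgnh_if_hom (dgmod_grading A') _ hz).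
rewrite (sgnh_hom (dgmod_grading A') (hom_sgnz (dgmod_grading A') _ hz)).
rewrite (sgnh_if_hom (dbga_grading B) _ ha) sgnz_sgnz (zmod_morph_sgnz (F2_morphr F _)) !tens_sgnzr.
rewrite opp_sgnz; congr (sgnz _ _); rewrite par /= oddzB !oddzD.
by case: (oddz d.2); case: (oddz (ddda t).2).
Qed.

Lemma box_morph_quadratic_term d x s u j : hom (mpr A) d x -> List.In s ds -> List.In u ds ->
  tens (ddc s * ddc u) (osg (oddz (dddc u).2)
    (F2 (sgnh_if (mpr A) (oddz (dddc s).2) (mact A x (dda s))) (dda u))) j -
  tens (ddc s * ddc u) (sg (oddz (dddc u).2)
    (mact A' (osg (oddz (dddc s).2) (F2 x (dda s))) (dda u))) j =
  beta d x j (sgnz (oddz (ddda u).2 && oddz (dddc s).2) (dda s * dda u)) (ddc s * ddc u).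
Proof.
move=> hx ins iu; have has := ddterm_a_hom DD ins; have hau := ddterm_a_hom DD iu.
have xa_hom := act_hom hx has; have F2xa_hom := F2_hom F xa_hom hau.
have F2x_hom := F2_hom F hx has.
rewrite (sgnh_if_hom (dgmod_grading A) _ xa_hom) (zmod_morph_sgnz (F2_morphl F _)).
rewrite (zmod_morph_sgnz (opp_sgnh_if_morph (dgmod_grading A') _)).
rewrite (opp_sgnh_if_hom (dgmod_grading A') _ F2xa_hom).
rewrite (opp_sgnh_if_hom (dgmod_grading A') _ F2x_hom).
rewrite (zmod_morph_sgnz (act_morphl _)) (zmod_morph_sgnz (sgnh_if_morph (dgmod_grading A') _)).
rewrite (sgnh_if_hom (dgmod_grading A') _ (act_hom F2x_hom hau)).
have relation3 : F2 (mact A x (dda s)) (dda u) =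
    sgnz (~~ oddz (ddda u).2) (mact A' (F2 x (dda s)) (dda u)) + F2 x (dda s * dda u).
  apply/eqP; rewrite -subr_eq -(F2_mul F) (sgnh_hom (dbga_grading B) hau).
  by rewrite (zmod_morph_sgnz (act_morphr _)) opp_sgnz.
rewrite relation3 /beta.
rewrite (sgnh_if_hom (dbga_grading B) _ (hom_sgnz (dbga_grading B) _ (mul_hom has hau))).
rewrite ?sgnz_sgnz !(zmod_morph_sgnz (F2_morphr F _)) !tens_sgnzr tensDr tens_sgnzr.
have ps := ddterm_parity DD ins; have pu := ddterm_parity DD iu.
apply: sgnz_cancel; rewrite /dadd /= ps pu !oddzB !oddzD;
  by case: (oddz d.2); case: (oddz (ddda s).2); case: (oddz (ddda u).2).
Qed.

Lemma box_morph_equation x j : dmu1 (box_morph ds F1 F2) x j =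
  dcomp (box_delta ds) (box_morph ds F1 F2) x j - dcomp (box_morph ds F1 F2) (box_delta ds) x j.
Proof.
apply/eqP; rewrite eq_sym -subr_eq0; apply/eqP; move: x.
apply: (hom_ind (dgmod_grading A) (f := fun x => dcomp (box_delta ds) (box_morph ds F1 F2) x j -
   dcomp (box_morph ds F1 F2) (box_delta ds) x j - dmu1 (box_morph ds F1 F2) x j)).
  apply: zmod_morph_sub; first apply: zmod_morph_sub.
  - by apply: dcomp_morph => [u v j'|u]; [apply: box_deltaB | apply: box_delta_fin].
  - by apply: dcomp_morph => [u v j'|u];
      [exact: (box_morphB ds F) | case: (box_morph_elt ds F1 F2 u)].
  - by apply: dmu1_morph => [u v j'|u];
      [exact: (box_morphB ds F) | case: (box_morph_elt ds F1 F2 u)].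
move=> d x hx.
rewrite (dcomp_shape (box_delta_shape ds x) j (box_morphB ds F) (box_morph_idem DD F)).
rewrite (dcomp_shape (box_morph_shape ds F1 F2 x) j (box_deltaB ds (A := A'))
  (box_delta_idem DD (A := A'))).
rewrite (dmu1_shape (box_morph_shape ds F1 F2 x)) mu1_1 tens0l add0r !mul1r.
rewrite box_morph_shape box_delta_shape (F1_m1 F).
under [X in _ + X - _ - _ = _]eq_bigr => t _ do
  rewrite box_morph_shape mulrDr -tensMl mulr1 mulr_sumr.
under [X in _ + X - _ - _ = _]eq_bigr => t _ do under eq_bigr => u _ do rewrite -tensMl.
under [X in _ - (_ + X) - _ = _]eq_bigr => t _ do
  rewrite box_delta_shape mulrDr -tensMl mulr1 mulr_sumr.
under [X in _ - (_ + X) - _ = _]eq_bigr => t _ do under eq_bigr => u _ do rewrite -tensMl.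
rewrite big_regroup (big_In_eq (fun t it => box_morph_linear_term j hx it)).
rewrite (big_In_eq (fun t it => big_In_eq (fun u iu => box_morph_quadratic_term j hx it iu))).
rewrite big_split /=; apply: (dd_structure_eq DD).
- exact: box_morph_testBl.
- exact: box_morph_testBr.
- exact: box_morph_test_idem.
Qed.
End BoxMorphEquation.

Lemma box_morph_dmorph k Γ (B C : dbga k Γ) (ds : seq (ddterm B C (Γ * int)))
    (A A' : dgmod B) (F1 : A -> A') (F2 : A -> B -> A') :
  is_rank1_DD ds -> is_ainf2 F1 F2 ->
  is_dmorph (box_delta ds : A -> mJ A -> C) (box_delta ds) (box_morph ds F1 F2).
Proof.
move=> DD F; split; last exact: box_morph_equation.
split; first exact: box_morphB.
split; first exact: box_morph_elt.
split; first exact: box_morph_idem.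
exact: box_morph_hom.
Qed.

(** * Composites and homotopies *)

Section ComposeBoxMorph.
Variables (k : nat) (Γ : zmodType) (B C : dbga k Γ) (ds : seq (ddterm B C (Γ * int))).
Hypothesis DD : is_rank1_DD ds.
Variables (A A' : dgmod B) (F1 : A -> A') (F2 : A -> B -> A') (G1 : A' -> A) (G2 : A' -> B -> A).
Hypothesis G : is_ainf2 G1 G2.
Hypothesis F2_or_G2_0 : (forall x a, F2 x a = 0) \/ (forall y a, G2 y a = 0).

Lemma box_morph_comp x j :
  dcomp (box_morph ds F1 F2) (box_morph ds G1 G2) x j =
  tens 1 (G1 (F1 x)) j +
  \sum_(t <- ds) tens (ddc t) (opp_sgnh_if (mpr A) (oddz (dddc t).2) (G2 (F1 x) (dda t))) j +
  \sum_(t <- ds) tens (ddc t) (opp_sgnh_if (mpr A) (oddz (dddc t).2) (G1 (F2 x (dda t)))) j.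
Proof.
rewrite (dcomp_shape (box_morph_shape ds F1 F2 x) j (box_morphB ds G) (box_morph_idem DD G)).
rewrite mul1r box_morph_shape; congr (_ + _); apply: eq_bigr => t _.
rewrite box_morph_shape mulrDr -tensMl mulr1 (F1_opp_sgnh_if G) big1 ?mulr0 ?addr0 // => u _.
have osg0 := zmod_morph0 (opp_sgnh_if_morph (dgmod_grading A') (oddz (dddc t).2)).
have osg0' := zmod_morph0 (opp_sgnh_if_morph (dgmod_grading A) (oddz (dddc u).2)).
by case: F2_or_G2_0 => h0; rewrite h0 ?osg0 ?(zmod_morph0 (F2_morphl G _)) osg0' tens0r.
Qed.
End ComposeBoxMorph.

Definition box_htpy k Γ (B C : dbga k Γ) (A A' : dgmod B) (H : A -> A') : A -> mJ A' -> C :=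
  fun x j => tens 1 (H x) j.

Lemma big_pair_regroup (V : zmodType) (T : Type) (ts : seq T) (a b c d : V) (X Y P Q : T -> V) :
  a - b = d + c -> (forall t, List.In t ts -> X t + Y t = P t + Q t) ->
  a + \sum_(t <- ts) X t + \sum_(t <- ts) Y t - b =
  c + \sum_(t <- ts) P t + (d + \sum_(t <- ts) Q t).
Proof.
move=> h1 h2; rewrite -(addrA a) -big_split /= (big_In_eq h2) big_split /=.
by rewrite addrAC h1 [d + c]addrC addrACA.
Qed.

Section BoxHtpy.
Variables (k : nat) (Γ : zmodType) (B C : dbga k Γ) (ds : seq (ddterm B C (Γ * int))).
Hypothesis DD : is_rank1_DD ds.
Variables (A A' : dgmod B) (F1 : A -> A') (F2 : A -> B -> A') (G1 : A' -> A) (G2 : A' -> B -> A).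
Hypothesis G : is_ainf2 G1 G2.
Hypothesis F2_or_G2_0 : (forall x a, F2 x a = 0) \/ (forall y a, G2 y a = 0).
Variable H : A -> A.
Hypothesis hH : is_ainf_htpy (acomp (aseq F1 F2) (aseq G1 G2)) (@aid _ _ B A) H.
Notation K := (box_htpy C H).

Lemma htpy_morph : zmod_morphism H. Proof. by case: hH. Qed.
Lemma htpy_idem x i : H (mact A x (idem B i)) = mact A (H x) (idem B i).
Proof. by case: hH => _ [h _]; apply: h. Qed.
Lemma htpy_hom d x : hom (mpr A) d x -> hom (mpr A) (d.1, d.2 - 1) (H x).
Proof. by case: hH => _ [_ [h _]]; case: d => ? ?; apply: h. Qed.
Lemma htpy_eq1 x : G1 (F1 x) - x = m1 A (H x) + H (m1 A x).
Proof. by case: hH => _ [_ [_ [/(_ x) + _]]]; rewrite /acomp big_nat1. Qed.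
Lemma htpy_eq2 x a :
  G2 (F1 x) a + G1 (F2 x a) = - mact A (H x) (sgnh (dpr B) a) + H (mact A x a).
Proof.
by case: hH => _ [_ [_ [_ [/(_ x a) + _]]]]; rewrite /acomp big_nat_recl // big_nat1 /= subr0.
Qed.

Lemma htpy_sgnh_if g x : H (sgnh_if (mpr A) g x) = opp_sgnh_if (mpr A) g (H x).
Proof.
case: g => //; rewrite /sgnh_if /opp_sgnh_if.
rewrite (sgnh_shift (dgmod_grading A) (dgmod_grading A) htpy_morph (c := true)) //.
by move=> d y hy; exists (d.1, d.2 - 1); split; [apply: htpy_hom | rewrite /= oddzB].
Qed.

Lemma box_htpyB x y j : K (x - y) j = K x j - K y j.
Proof. by rewrite /box_htpy htpy_morph tensBr. Qed.
Lemma box_htpy_idem x i j : K (mact A x (idem B i)) j = idem C i * K x j.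
Proof. by rewrite /box_htpy htpy_idem tens_act_idem mul1r -[idem C i]mulr1 tensMl mulr1. Qed.
Lemma box_htpy_shape x j :
  K x j = tens 1 (H x) j + \sum_(t <- [::] : seq unit) tens 0 (0 : A) j.
Proof. by rewrite big_nil addr0. Qed.

Lemma box_htpy_dmap : dmap_of_deg (-1) K.
Proof.
split; first exact: box_htpyB.
split; first by move=> x; apply: (shape_elt (box_htpy_shape x)).
split; first exact: box_htpy_idem.
move=> d x j d' hx hj; apply: (eq_hom _ (tens_hom (hom1 C) (htpy_hom hx) hj)).
by case: d {hx} => ? ?; rewrite /dadd /= !add0r !addr0.
Qed.

Lemma box_htpy_equation x j :
  dcomp (box_morph ds F1 F2) (box_morph ds G1 G2) x j - did C x j =
  dcomp (box_delta ds) K x j + dcomp K (box_delta ds) x j + dmu1 K x j.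
Proof.
rewrite (box_morph_comp DD F1 G F2_or_G2_0).
rewrite (dcomp_shape (box_delta_shape ds x) j box_htpyB box_htpy_idem).
rewrite (dcomp_shape (box_htpy_shape x) j (box_deltaB ds (A := A)) (box_delta_idem DD (A := A))).
rewrite (dmu1_shape (box_htpy_shape x)) !big_nil mu1_1 tens0l !addr0 !mul1r box_delta_shape.
under [X in _ = _ + X + _]eq_bigr => t _ do rewrite /box_htpy -tensMl mulr1.
apply: big_pair_regroup; first by rewrite /did -tensBr -tensDr htpy_eq1.
move=> t it; rewrite htpy_sgnh_if -!tensDr; congr (tens _ _ j).
rewrite -!(zmod_morphD (opp_sgnh_if_morph (dgmod_grading A) _)) htpy_eq2 addrC.
rewrite (zmod_morphD (opp_sgnh_if_morph (dgmod_grading A) _)); congr (_ + _).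
rewrite (sgnh_hom (dbga_grading B) (ddterm_a_hom DD it)) (zmod_morph_sgnz (act_morphr _)).
rewrite (ddterm_parity DD it) /opp_sgnh_if /sgnh_if.
by case: (oddz (ddda t).2) => /=; rewrite ?(sgnhN (dgmod_grading A)) ?opprK.
Qed.

Lemma box_htpy_dhtpy :
  is_dhtpy (box_delta ds : A -> mJ A -> C) (box_delta ds)
    (dcomp (box_morph ds F1 F2) (box_morph ds G1 G2)) (fun x => did C x) K.
Proof. by split; [exact: box_htpy_dmap | move=> x j; apply: box_htpy_equation]. Qed.
End BoxHtpy.

Theorem corollary6p53 (k : nat) (Γ : zmodType) (B B' : dbga k Γ)
    (A A' : dgmod B) (ds : seq (ddterm B B' (Γ * int)))
    (F1 : A -> A') (F2 : A -> B -> A') (G1 : A' -> A) (G2 : A' -> B -> A)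
    (H1 : A -> A) (H1' : A' -> A') :
  is_rank1_DD ds ->
  is_ainf2 F1 F2 ->
  is_ainf2 G1 G2 ->
  ((forall x a, F2 x a = 0) \/ (forall y a, G2 y a = 0)) ->
  is_ainf_htpy (acomp (aseq F1 F2) (aseq G1 G2)) (@aid _ _ B A) H1 ->
  is_ainf_htpy (acomp (aseq G1 G2) (aseq F1 F2)) (@aid _ _ B A') H1' ->
  dhtpy_equiv (box_delta ds : A -> mJ A -> B') (box_delta ds : A' -> mJ A' -> B').
Proof.
move=> DD F G F2_or_G2_0 H H'.
have G2_or_F2_0 : (forall y a, G2 y a = 0) \/ (forall x a, F2 x a = 0).
  by case: F2_or_G2_0; [right | left].
exists (box_morph ds F1 F2), (box_morph ds G1 G2), (box_htpy B' H1), (box_htpy B' H1').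
split; first exact: box_morph_dmorph.
split; first exact: box_morph_dmorph.
by split; [exact: box_htpy_dhtpy H | exact: box_htpy_dhtpy H'].
Qed.
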